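(* Let $n\ge2$ and $\mathsf u\in\mathcal S_n$. Then $\mathsf r^{\mathsf u}\in\textsc{fact}(\lambda_n)$; that is, $\mathsf r^{\mathsf u}$ consists of $2n-2$ reflections whose product (in order) equals $\lambda_n$.
   Context: $\widetilde S_n$ is the group, under composition $(vw)(k)=v(w(k))$, of bijections $w:\mathbb Z\to\mathbb Z$ with $w(i+n)=w(i)+n$ and $\sum_{i=1}^n w(i)=\binom{n+1}2$. For $i\not\equiv j\pmod n$, $(\!(i,j)\!)$ swaps $i+kn$ and $j+kn$ for all $k\in\mathbb Z$; $s_i=(\!(i,i+1)\!)$ for $i\in\{0,\dots,n-1\}$. $\lambda_n\in\widetilde S_n$ is given by $\lambda_n(k)=k+n$ for $k\not\equiv0\pmod n$ and $\lambda_n(k)=k-n(n-1)$ for $k\equiv0\pmod n$; its reflection length is $2n-2$, and $\textsc{fact}(\lambda_n)$ is the set of sequences of $2n-2$ reflections whose product is $\lambda_n$. $\bm\lambda_n$ is the word $[s_0,\dots,s_{n-1}]$ repeated $n-1$ times, with $j$-th letter $\sigma_j=s_{(j-1)\bmod n}$ (index in $\{0,\dots,n-1\}$). A subword is $\mathsf u=[u_1,\dots,u_{n(n-1)}]$ with $u_j\in\{\sigma_j,e\}$; indices with $u_j=e$ are skips. Write $u_{(j)}=u_1\cdots u_j$ ($u_{(0)}=e$). $\mathcal S_n$ is the set of subwords with exactly $2n-2$ skips and $u_1\cdots u_{n(n-1)}=e$. $\textsc{inv}(\mathsf u)=[t_1,\dots,t_{n(n-1)}]$ with $t_j=u_{(j-1)}\sigma_ju_{(j-1)}^{-1}$,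 and $\mathsf r^{\mathsf u}$ is the subsequence of $\textsc{inv}(\mathsf u)$ consisting of the $t_j$ with $j$ a skip, in increasing order of $j$. *)

(* Elements of the affine symmetric group are represented as
   functions int -> int, composed as (v w)(k) = v (w k). *)
From mathcomp Require Import all_boot all_order all_algebra.
Set Implicit Arguments. Unset Strict Implicit. Unset Printing Implicit Defensive.
Import Order.TTheory GRing.Theory Num.Theory.
Local Open Scope ring_scope.

Definition comp (v w : int -> int) : int -> int := fun k => v (w k).
Definition idp : int -> int := fun k => k.

(* the reflection ((i,j)) of tilde S_n: swaps i + kn and j + kn for all k
   (meaningful when i and j are not congruent mod n) *)
Definition arefl (n : nat) (i j : int) : int -> int := fun k =>
  if ((k - i) %% n%:Z)%Z == 0 then k - i + j
  else if ((k - j) %% n%:Z)%Z == 0 then k - j + i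
  else k.

Definition is_reflection (n : nat) (f : int -> int) : Prop :=
  exists i j : int, ((i - j) %% n%:Z)%Z != 0 /\ forall k, f k = arefl n i j k.

Definition sref (n : nat) (i : nat) : int -> int := arefl n i%:Z (i.+1)%:Z.

Definition lambda_n (n : nat) : int -> int := fun k =>
  if (k %% n%:Z)%Z == 0 then k - (n * (n - 1))%:Z else k + n%:Z.

Definition prodseq (rs : seq (int -> int)) : int -> int := foldr comp idp rs.

Definition in_fact_lambda (n : nat) (rs : seq (int -> int)) : Prop :=
  size rs = (2 * n - 2)%N /\
  (forall p, (p < size rs)%N -> is_reflection n (nth idp rs p)) /\
  (forall k, prodseq rs k = lambda_n n k).

(* The word bold-lambda_n has length n(n-1); its letter at 0-based position p
   (i.e. letter j = p+1) is sigma_j = s_{p mod n}. *)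
Definition wlen (n : nat) : nat := (n * (n - 1))%N.
Definition sigma (n : nat) (p : nat) : int -> int := sref n (p %% n).

(* A subword is encoded by a bit sequence b of length n(n-1): b_p = true iff
   position p (letter j = p+1) is a skip, i.e. u_j = e; otherwise u_j = sigma_j. *)
Definition uletter (n : nat) (b : seq bool) (p : nat) : int -> int :=
  if nth false b p then idp else sigma n p.

Definition upref (n : nat) (b : seq bool) (m : nat) : int -> int :=
  prodseq [seq uletter n b p | p <- iota 0 m].

(* (u_(m))^{-1} = u_m^{-1} ... u_1^{-1} = u_m ... u_1, each u_j being an
   involution (identity or a simple reflection) *)
Definition upref_inv (n : nat) (b : seq bool) (m : nat) : int -> int :=
  prodseq [seq uletter n b p | p <- rev (iota 0 m)].

(* t_j = u_(j-1) sigma_j u_(j-1)^{-1}, at 0-based position p = j-1 *)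
Definition tinv (n : nat) (b : seq bool) (p : nat) : int -> int :=
  comp (upref n b p) (comp (sigma n p) (upref_inv n b p)).

Definition in_Sn (n : nat) (b : seq bool) : Prop :=
  size b = wlen n /\ count id b = (2 * n - 2)%N /\
  (forall k, upref n b (wlen n) k = k).

Definition r_u (n : nat) (b : seq bool) : seq (int -> int) :=
  [seq tinv n b p | p <- iota 0 (wlen n) & nth false b p].

(* Each t_j is the conjugate of the simple reflection sigma_j by u_(j-1),
   a bijection commuting with translation by n, hence t_j is again a
   reflection.  Telescoping gives sigma_1 ... sigma_m = (prod of the t_j over
   the skips j <= m) u_(m); at m = n(n-1) we have u_(m) = e, so the product of
   r^u is the whole word, i.e. c^(n-1) for the Coxeter element
   c = s_0 s_1 ... s_(n-1).  Explicitly c(k) = k - n if k = 0 mod n,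
   c(k) = k + 2 if k = -1 mod n, and c(k) = k + 1 otherwise; so c^(n-1) moves
   multiples of n down by n(n-1) and every other k up by exactly n, which is
   lambda_n. *)
From mathcomp Require Import all_boot all_order all_algebra.
From mathcomp Require Import zify.
Set Implicit Arguments. Unset Strict Implicit. Unset Printing Implicit Defensive.
Import Order.TTheory GRing.Theory Num.Theory.
Local Open Scope ring_scope.

Lemma prodseq_cat s t : prodseq (s ++ t) = comp (prodseq s) (prodseq t).
Proof. by elim: s => //= f s ->. Qed.

Lemma prodseq_rcons s f : prodseq (rcons s f) = comp (prodseq s) f.
Proof. by rewrite -cats1 prodseq_cat. Qed.

Lemma iota0S m : iota 0 m.+1 = rcons (iota 0 m) m.
Proof. by rewrite -cats1 -addn1 iotaD. Qed.

(* Innermost conditionals first, so that lia only sees if-free hypotheses. *)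
Ltac case_ifs_lia :=
  repeat match goal with |- context [if ?c then _ else _] =>
    lazymatch c with
    | context [if _ then _ else _] => fail
    | _ => let E := fresh in destruct c eqn:E
    end end; lia.

Section Periodic.

Variable n : nat.

Definition periodic (w : int -> int) :=
  forall k q, w (k + q * n%:Z) = w k + q * n%:Z.

Lemma modz_eq0_dvdz x : ((x %% n%:Z)%Z == 0) = (n%:Z %| x)%Z.
Proof. exact/eqP/dvdz_mod0P. Qed.

Lemma dvdz_addMr x q : (n%:Z %| x + q * n%:Z)%Z = (n%:Z %| x)%Z.
Proof. by rewrite -!modz_eq0_dvdz addrC modzMDl. Qed.

Lemma areflE i j k : arefl n i j k =
  if (n%:Z %| k - i)%Z then k - i + j
  else if (n%:Z %| k - j)%Z then k - j + i else k.
Proof. by rewrite /arefl !modz_eq0_dvdz. Qed.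

Lemma periodic_comp v w : periodic v -> periodic w -> periodic (comp v w).
Proof. by move=> pv pw k q; rewrite /comp pw pv. Qed.

Lemma periodic_prodseq_map (T : Type) (F : T -> int -> int) s :
  (forall x, periodic (F x)) -> periodic (prodseq (map F s)).
Proof.
by move=> pF; elim: s => [|x s IH] //=; apply: periodic_comp.
Qed.

Lemma periodic_arefl i j : periodic (arefl n i j).
Proof.
move=> k q; rewrite !areflE.
rewrite (_ : k + q * n%:Z - i = k - i + q * n%:Z); last by lia.
rewrite (_ : k + q * n%:Z - j = k - j + q * n%:Z); last by lia.
by rewrite !dvdz_addMr; case_ifs_lia.
Qed.

Lemma periodic_dvdz_sub w x y :
  periodic w -> (n%:Z %| x - y)%Z -> w x - w y = x - y.
Proof.
move=> pw /dvdzP[q Hq].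
by rewrite (_ : x = y + q * n%:Z) ?pw; lia.
Qed.

Lemma periodic_cancel w w' :
  periodic w -> cancel w' w -> cancel w w' -> periodic w'.
Proof.
by move=> pw w'K wK k q; rewrite -{1}[k]w'K -pw wK.
Qed.

Lemma arefl_invol i j : ~~ (n%:Z %| i - j)%Z -> involutive (arefl n i j).
Proof.
move=> nij k.
have dvdz_swap x y z :
  (n%:Z %| x - y)%Z -> (n%:Z %| x - z)%Z -> (n%:Z %| y - z)%Z.
  by move=> /dvdzP[s Hs] /dvdzP[t Ht]; apply/dvdzP; exists (t - s); lia.
case: (boolP (n%:Z %| k - i)%Z) => ki; last case: (boolP (n%:Z %| k - j)%Z) => kj.
- have yi : ~~ (n%:Z %| k - i + j - i)%Z.
    by apply: contra nij => /(dvdz_swap _ _ j); rewrite !addrK => /(_ ki).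
  by rewrite (areflE i j k) ki areflE (negbTE yi) addrK ki subrK.
- have yi : (n%:Z %| k - j + i - i)%Z by rewrite addrK.
  by rewrite (areflE i j k) (negbTE ki) kj areflE yi addrK subrK.
- by rewrite !areflE (negbTE ki) (negbTE kj) (negbTE ki) (negbTE kj).
Qed.

Section Conjugation.

Variables w w' : int -> int.
Hypotheses (pw : periodic w) (w'K : cancel w' w) (wK : cancel w w').

Lemma periodic_dvdz_bij x y : (n%:Z %| w x - w y)%Z = (n%:Z %| x - y)%Z.
Proof.
have pw' := periodic_cancel pw w'K wK.
apply/idP/idP => dv; last by rewrite periodic_dvdz_sub.
by rewrite -[x]wK -[y]wK (periodic_dvdz_sub pw' dv).
Qed.

Lemma arefl_conj i j : comp w (comp (arefl n i j) w') =1 arefl n (w i) (w j).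
Proof.
move=> k; rewrite /comp !areflE.
have dvdz_w'k a : (n%:Z %| w' k - a)%Z = (n%:Z %| k - w a)%Z.
  by rewrite -periodic_dvdz_bij w'K.
have move_by x a b : (n%:Z %| x - a)%Z -> w (x - a + b) = w x - w a + w b.
  move=> dv; have := periodic_dvdz_sub pw dv.
  have /(periodic_dvdz_sub pw) : (n%:Z %| x - a + b - b)%Z by rewrite addrK.
  lia.
rewrite !dvdz_w'k; case: ifP => [ki|_]; first by rewrite move_by ?dvdz_w'k // w'K.
by case: ifP => [kj|_]; rewrite ?move_by ?dvdz_w'k // w'K.
Qed.

Lemma is_reflection_conj i j : ~~ (n%:Z %| i - j)%Z ->
  is_reflection n (comp w (comp (arefl n i j) w')).
Proof.
move=> nij; exists (w i), (w j); split; last exact: arefl_conj.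
by rewrite modz_eq0_dvdz periodic_dvdz_bij.
Qed.

End Conjugation.

End Periodic.

Section Subwords.

Variables (n : nat) (b : seq bool).
Hypothesis n_gt1 : (1 < n)%N.

Lemma sref_not_dvdz m : ~~ (n%:Z %| m%:Z - m.+1%:Z)%Z.
Proof.
rewrite (_ : m%:Z - m.+1%:Z = - 1); last by lia.
by rewrite dvdzE /= dvdn1; lia.
Qed.

Lemma periodic_uletter p : periodic n (uletter n b p).
Proof. by rewrite /uletter; case: ifP => _ //; apply: periodic_arefl. Qed.

Lemma uletter_invol p : involutive (uletter n b p).
Proof.
by rewrite /uletter; case: ifP => _ //; apply/arefl_invol/sref_not_dvdz.
Qed.

Lemma upref_S m : upref n b m.+1 = comp (upref n b m) (uletter n b m).
Proof. by rewrite /upref iota0S map_rcons prodseq_rcons. Qed.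

Lemma upref_inv_S m :
  upref_inv n b m.+1 = comp (uletter n b m) (upref_inv n b m).
Proof. by rewrite /upref_inv iota0S rev_rcons. Qed.

Lemma periodic_upref m : periodic n (upref n b m).
Proof. exact/periodic_prodseq_map/periodic_uletter. Qed.

Lemma uprefK m : cancel (upref n b m) (upref_inv n b m).
Proof.
elim: m => [|m IH] k //.
by rewrite upref_S upref_inv_S /comp IH uletter_invol.
Qed.

Lemma upref_invK m : cancel (upref_inv n b m) (upref n b m).
Proof.
elim: m => [|m IH] k //.
by rewrite upref_S upref_inv_S /comp uletter_invol.
Qed.

Lemma tinv_is_reflection p : is_reflection n (tinv n b p).
Proof.
rewrite /tinv /sigma /sref.
apply: (is_reflection_conj (periodic_upref p) (upref_invK p) (uprefK p)).
exact: sref_not_dvdz.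
Qed.

Lemma prod_sigma_skips m k :
  prodseq [seq sigma n p | p <- iota 0 m] k =
  prodseq [seq tinv n b p | p <- iota 0 m & nth false b p] (upref n b m k).
Proof.
elim: m k => [|m IH] k //.
rewrite iota0S filter_rcons !map_rcons prodseq_rcons /comp IH upref_S /comp.
rewrite /uletter; case: ifP => _ //.
by rewrite map_rcons prodseq_rcons /comp /tinv /comp uprefK.
Qed.

End Subwords.

Lemma size_r_u n b : size b = wlen n -> size (r_u n b) = count id b.
Proof.
move=> size_b; rewrite size_map size_filter -size_b.
by rewrite -[in RHS](mkseq_nth false b) /mkseq count_map.
Qed.

Definition coxeter (n : nat) : int -> int :=
  prodseq [seq sigma n p | p <- iota 0 n].

Lemma prod_sigma_iota_mul n j :
  prodseq [seq sigma n p | p <- iota 0 (j * n)] = prodseq (nseq j (coxeter n)).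
Proof.
elim: j => [|j IH] //.
rewrite mulSnr iotaD map_cat prodseq_cat IH -addn1 nseqD prodseq_cat.
congr comp; rewrite add0n -[(j * n)%N]addn0 iotaDl -map_comp.
under eq_map => p do rewrite /= /sigma modnMDl.
by [].
Qed.

Section Coxeter.

Variable n : nat.
Hypothesis n_gt1 : (1 < n)%N.

Lemma dvdz_qr_sub q r i : 0 <= r < n%:Z -> 0 <= i <= n%:Z ->
  (n%:Z %| q * n%:Z + r - i)%Z = (r == i) || (r == 0) && (i == n%:Z).
Proof.
move=> hr hi; rewrite -addrA addrC dvdz_addMr.
apply/dvdzP/idP => [[t Ht]|].
- have : t = 0 \/ t = -1 by nia.
  lia.
- by case/orP=> [/eqP->|/andP[/eqP-> /eqP->]]; [exists 0 | exists (-1)]; lia.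
Qed.

Lemma sref_qr m q r : (m < n)%N -> 0 <= r < n%:Z ->
  sref n m (q * n%:Z + r) = q * n%:Z +
    (if r == m%:Z then r + 1
     else if (r == m.+1%:Z) || (r == 0) && (m.+1 == n) then r - 1 else r).
Proof.
move=> mn hr; rewrite /sref areflE !dvdz_qr_sub //; try lia.
case_ifs_lia.
Qed.

Lemma prod_sigma_prefix_qr m q r : (m < n)%N -> 0 <= r < n%:Z ->
  prodseq [seq sigma n p | p <- iota 0 m] (q * n%:Z + r) =
  q * n%:Z + (if r < m%:Z then r + 1 else if r == m%:Z then 0 else r).
Proof.
elim: m r => [|m IH] r mn hr.
  by rewrite /= /idp; case_ifs_lia.
rewrite iota0S map_rcons prodseq_rcons /comp /sigma modn_small; last lia.
rewrite sref_qr; [|lia|done].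
rewrite IH; [case_ifs_lia|lia|case_ifs_lia].
Qed.

Lemma coxeter_qr q r : 0 <= r < n%:Z ->
  coxeter n (q * n%:Z + r) =
  if r == 0 then (q - 1) * n%:Z
  else if r == n%:Z - 1 then (q + 1) * n%:Z + 1 else q * n%:Z + (r + 1).
Proof.
move=> hr; have last_lt : (n.-1 < n)%N by rewrite prednK // ltnW.
rewrite /coxeter (_ : iota 0 n = rcons (iota 0 n.-1) n.-1); last first.
  by rewrite -iota0S prednK // ltnW.
rewrite map_rcons prodseq_rcons /comp [sigma n n.-1]/sigma modn_small //.
rewrite sref_qr // prednK ?(ltnW n_gt1) //.
case: ifP => [r_last|r_not_last]; last case: ifP => [r0|r_not0].
- rewrite (_ : q * n%:Z + (r + 1) = (q + 1) * n%:Z + 0); last by lia.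
  by rewrite prod_sigma_prefix_qr //; case_ifs_lia.
- rewrite (_ : q * n%:Z + (r - 1) = (q - 1) * n%:Z + n.-1%:Z); last by lia.
  by rewrite prod_sigma_prefix_qr //; case_ifs_lia.
- by rewrite prod_sigma_prefix_qr //; case_ifs_lia.
Qed.

Lemma coxeter_pow_qr j q r : (j < n)%N -> 0 <= r < n%:Z ->
  prodseq (nseq j (coxeter n)) (q * n%:Z + r) =
  if r == 0 then (q - j%:Z) * n%:Z
  else if r + j%:Z < n%:Z then q * n%:Z + (r + j%:Z)
  else q * n%:Z + (r + j%:Z + 1).
Proof.
elim: j q r => [|j IH] q r jn hr.
  by rewrite /= /idp; case_ifs_lia.
rewrite -addn1 nseqD prodseq_cat /= /comp /idp coxeter_qr //.
case: ifP => [r0|r_not0]; last case: ifP => [r_last|r_not_last].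
- by rewrite -[_ * n%:Z]addr0 IH; [case_ifs_lia|lia|lia].
- by rewrite IH; [case_ifs_lia|lia|lia].
- by rewrite IH; [case_ifs_lia|lia|lia].
Qed.

Lemma coxeter_pow_lambda : prodseq (nseq n.-1 (coxeter n)) =1 lambda_n n.
Proof.
move=> k; have n_pos : 0 < n%:Z by lia.
have := divz_eq k n%:Z; set q := (k %/ n%:Z)%Z; set r := (k %% n%:Z)%Z => Ek.
have hr : 0 <= r < n%:Z by rewrite modz_ge0 ?ltz_pmod //; lia.
rewrite /lambda_n -/r {1}Ek coxeter_pow_qr //; last by lia.
case_ifs_lia.
Qed.

End Coxeter.

Theorem corollary5p10 (n : nat) (b : seq bool) :
  (2 <= n)%N -> in_Sn n b -> in_fact_lambda n (r_u n b).
Proof.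
move=> n_gt1 [size_b [skips_b upref_e]]; split; [|split].
- by rewrite size_r_u.
- move=> p; rewrite size_map => lt_p; rewrite (nth_map 0%N) //.
  exact: tinv_is_reflection.
- move=> k; have := prod_sigma_skips b n_gt1 (wlen n) k.
  rewrite upref_e => <-.
  by rewrite /wlen mulnC prod_sigma_iota_mul subn1 coxeter_pow_lambda.
Qed.
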